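(* Let $G$ be a graph and $t$ a positive integer. Then $\operatorname{th}_{\operatorname{H}}(G)\leq t$ if and only if there exist integers $a\geq 1$ and $b\geq 0$ with $a+b=t$ such that $G$ is isomorphic to a graph obtained from $K_a\,\square\,\overline{K_{b+1}}$ by a sequence of operations, each of which is either identifying an empty pair or deleting a complete edge.
   Context: All graphs are finite, simple and undirected. $K_a\,\square\,\overline{K_{b+1}}$ has vertex set $\{(i,j):1\leq i\leq a,\ 1\leq j\leq b+1\}$, with $(i,j)$ adjacent to $(i',j')$ iff $j=j'$ and $i\neq i'$ (each column $j$ induces a $K_a$, each row $i$ is an independent set); these edges are the complete edges. An empty pair is a pair of vertices $\{(i,j),(i,j+1)\}$ lying in the same row and in adjacent columns (tracked through the operations). Identifying an empty pair replaces its two vertices by a single vertex whose neighborhood is the union of their neighborhoods (discarding loops and multiple edges); deleting a complete edge removes one complete edge. Hopping color change rule: a blue vertex $v$ may force a white vertex $w$ to become blue if $v$ has not previously performed a force and every neighbor of $v$ is blue. For an initial blue set $B$, a chronological list of forces of $B$ is a sequence of such forces applied one at a time until no further force is possible; its underlying unordered set is a set of forces of $B$. $B$ is a hopping forcing set if some chronological list of forces of $B$ turns all vertices blue. For a set of forces $\mathcal F$ of $B$, let $\mathcal F^{(0)}=B$ and for $t\geq1$ let $\mathcal F^{(t)}$ be the set of vertices $w\notin U_{t-1}:=\bigcup_{i=0}^{t-1}\mathcal F^{(i)}$ for which there is $(v\to w)\in\mathcal F$ with $v\in U_{t-1}$ and all neighbors of $v$ in $U_{t-1}$. $\operatorname{pt}_{\operatorname{H}}(G;\mathcal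 F)$ is the least $t$ with $\bigcup_{i=0}^t\mathcal F^{(i)}=V(G)$ ($\infty$ if none); $\operatorname{pt}_{\operatorname{H}}(G;B)$ is the minimum over sets of forces $\mathcal F$ of $B$ ($\infty$ if $B$ is not a hopping forcing set). $\operatorname{th}_{\operatorname{H}}(G)=\min_{B\subseteq V(G)}\big(|B|+\operatorname{pt}_{\operatorname{H}}(G;B)\big)$. *)

From mathcomp Require Import all_boot.
From mathcomp Require Import boolp.

Set Implicit Arguments.
Unset Strict Implicit.
Unset Printing Implicit Defensive.

(* A graph is a symmetric irreflexive relation [e : rel T] on a finType T. *)

Section Hopping.
Variables (T : finType) (e : rel T).

Definition hop_can_force (blue used : {set T}) (v w : T) : bool :=
  [&& v \in blue, v \notin used, [forall u, e v u ==> (u \in blue)]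
    & w \notin blue].

Definition hop_stuck (blue used : {set T}) : bool :=
  [forall v, forall w, ~~ hop_can_force blue used v w].

Fixpoint chron_ok (blue used : {set T}) (s : seq (T * T)) : bool :=
  match s with
  | [::] => hop_stuck blue used
  | (v, w) :: s' => hop_can_force blue used v w &&
                    chron_ok (w |: blue) (v |: used) s'
  end.

Definition chron_list (B : {set T}) (s : seq (T * T)) : bool :=
  chron_ok B set0 s.

Definition set_of_forces (B : {set T}) (F : {set T * T}) : Prop :=
  exists s, chron_list B s /\ F = [set x in s].

Definition hopping_forcing_set (B : {set T}) : Prop :=
  exists s, chron_list B s /\
    B :|: [set w | [exists v, (v, w) \in s]] = [set: T].

Fixpoint hopU (B : {set T}) (F : {set T * T}) (t : nat) : {set T} :=
  match t with
  | 0 => B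
  | t'.+1 =>
      let U := hopU B F t' in
      U :|: [set w | [exists v, [&& (v, w) \in F, v \in U &
                                   [forall u, e v u ==> (u \in U)]]]]
  end.

(* pt_H(G;F); None encodes infinity *)
Definition ptF (B : {set T}) (F : {set T * T}) : option nat :=
  match pselect (exists t, hopU B F t == [set: T]) with
  | left h => Some (ex_minn h)
  | right _ => None
  end.

(* pt_H(G;B); None encodes infinity *)
Definition ptB (B : {set T}) : option nat :=
  if pselect (hopping_forcing_set B) then
    match pselect (exists k,
           `[< exists F, set_of_forces B F /\ ptF B F = Some k >]) with
    | left h => Some (ex_minn h)
    | right _ => None
    end
  else None.

(* th_H(G) = min_B (|B| + pt_H(G;B)).  The default branch is unreachable
   (B = V(G) gives a finite value); it returns the trivial bound |V(G)|. *)
Definition thH : nat :=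
  match pselect (exists n,
         `[< exists (B : {set T}) p, ptB B = Some p /\ n = #|B| + p >]) with
  | left h => ex_minn h
  | right _ => #|T|
  end.

End Hopping.

Definition KV (a b : nat) := ('I_a * 'I_b.+1)%type.

(* A derived graph is represented by an equivalence relation [eqv] on the
   original vertices (the classes are the current vertices) together with a
   class-compatible adjacency relation [adj]. *)
Inductive obtainable (a b : nat) : rel (KV a b) -> rel (KV a b) -> Prop :=
| obt_start :
    obtainable (fun x y => x == y)
               (fun x y => (x.2 == y.2) && (x.1 != y.1))
| obt_identify (eqv adj : rel (KV a b)) (x y : KV a b) :
    obtainable eqv adj ->
    (* {x, y} is an empty pair: same row, adjacent columns, still distinct *)
    x.1 = y.1 -> (y.2 : nat) = (x.2 : nat).+1 -> ~~ eqv x y ->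
    let eqv' := fun u v => [|| eqv u v, eqv u x && eqv v y
                                      | eqv u y && eqv v x] in
    obtainable eqv'
      (fun u v => ~~ eqv' u v &&
         [exists u', exists v', [&& eqv' u u', eqv' v v' & adj u' v']])
| obt_delete (eqv adj : rel (KV a b)) (x y : KV a b) :
    obtainable eqv adj ->
    adj x y ->
    obtainable eqv
      (fun u v => adj u v &&
         ~~ ((eqv u x && eqv v y) || (eqv u y && eqv v x))).

Definition iso_to_quotient (T : finType) (e : rel T) (a b : nat)
  (eqv adj : rel (KV a b)) : Prop :=
  exists f : T -> KV a b,
    (forall t t', eqv (f t) (f t') -> t = t') /\
    (forall v, exists t, eqv v (f t)) /\
    (forall t t', e t t' = adj (f t) (f t')).

From mathcomp Require Import all_boot boolp zify.

Set Implicit Arguments.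
Unset Strict Implicit.
Unset Printing Implicit Defensive.

(* Both sides of the equivalence amount to a layout of G on the grid
   'I_a * 'I_b.+1: a surjection g onto V(G) whose fibres are intervals of
   single rows and such that the ends of every edge are images of two cells of
   one column.
   Given a layout, colour the first column blue and let every row advance one
   column per round.  A vertex leaving its row has all its neighbours in
   earlier columns, so it can hop-force the next vertex of the row; after b
   rounds every vertex is blue, whence th_H(G) <= a + b.
   Conversely, take B and p with th_H(G) = |B| + p.  A chronological list of
   forces of B splits V(G) into |B| forcing chains; putting in row i at
   time j the vertex of the i-th chain that is current at time j gives a layout
   with a = |B|, b = t - |B| >= p.  Since a vertex forces only once all its
   neighbours are blue, adjacent vertices are current in their chains at a
   common time.
   Finally, identifying consecutive cells of the same fibre and then deleting
   the complete edges that are not edges of G produces G from the grid, while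
   identifications of empty pairs keep the classes row intervals, so every
   obtainable graph carries a layout. *)

Lemma uniq_map_inj_in (X Y : eqType) (h : X -> Y) (s : seq X) :
  uniq (map h s) -> {in s &, injective h}.
Proof.
elim: s => [|x s IH] //= /andP [hx us] u v.
rewrite !inE => /orP [/eqP -> | us'] /orP [/eqP -> | vs'] // huv.
- by move: hx; rewrite huv map_f.
- by move: hx; rewrite -huv map_f.
- exact: IH.
Qed.

Section Merge.
Variables (X : Type) (eqv : rel X).
Hypotheses (eqv_sym : symmetric eqv) (eqv_trans : transitive eqv).

Definition merge (x y : X) : rel X :=
  fun u v => [|| eqv u v, eqv u x && eqv v y | eqv u y && eqv v x].

Lemma mergeE x y u v :
  merge x y u v = eqv u v || (eqv u x || eqv u y) && (eqv v x || eqv v y).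
Proof.
rewrite /merge; case Huv: (eqv u v) => //=.
have E p : eqv u p -> eqv v p -> eqv u v.
  by move=> hu hv; apply: eqv_trans hu _; rewrite eqv_sym.
by case Hux: (eqv u x); case Huy: (eqv u y); case Hvx: (eqv v x);
  case Hvy: (eqv v y) => //=; rewrite ?(E _ Hux Hvx) ?(E _ Huy Hvy) in Huv.
Qed.

Lemma merge_sym x y : symmetric (merge x y).
Proof. by move=> u v; rewrite !mergeE eqv_sym andbC. Qed.

Lemma merge_trans x y : transitive (merge x y).
Proof.
have M u p : eqv u p -> (eqv u x || eqv u y) = (eqv p x || eqv p y).
  by move=> hup; congr orb; apply/idP/idP; apply: eqv_trans; rewrite // eqv_sym.
move=> v u w; rewrite !mergeE => /orP [h1|/andP [h1 h2]] /orP [h3|/andP [h3 h4]].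
- by rewrite (eqv_trans h1 h3).
- by rewrite (M _ _ h1) h3 h4 orbT.
- by rewrite -(M _ _ h3) h1 h2 orbT.
- by rewrite h1 h4 orbT.
Qed.

End Merge.

Section Throttling.
Variables (T : finType) (e : rel T).

Lemma hopU_mono B F k k' : k <= k' -> hopU e B F k \subset hopU e B F k'.
Proof.
move=> /subnK <-; elim: (k' - k) => [|d IH]; first exact: subxx.
by rewrite addSn /=; apply: subset_trans IH (subsetUl _ _).
Qed.

Lemma hopU_set0 F k : hopU e set0 F k = set0.
Proof.
elim: k => [|k IH] //=; rewrite IH set0U; apply/setP => w; rewrite !inE.
by apply/existsP => [[v]]; rewrite inE andbF.
Qed.

Lemma ptF_le B F m : hopU e B F m = setT -> exists2 k, ptF e B F = Some k & k <= m.
Proof.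
move=> hU; rewrite /ptF; case: pselect => [h|n]; last first.
  by exfalso; apply: n; exists m; rewrite hU eqxx.
by exists (ex_minn h) => //; case: ex_minnP => k _; apply; rewrite hU eqxx.
Qed.

Lemma hopU_sub B F k : hopU e B F k \subset B :|: [set w | [exists v, (v, w) \in F]].
Proof.
elim: k => [|k IH] /=; first exact: subsetUl.
rewrite subUset IH; apply/subsetP => w; rewrite inE => /existsP [v /and3P [h _ _]].
by rewrite !inE; apply/orP; right; apply/existsP; exists v.
Qed.

Lemma ptB_le B s m : chron_list e B s -> hopU e B [set x in s] m = setT ->
  exists2 p, ptB e B = Some p & p <= m.
Proof.
move=> hs hU.
have fs : set_of_forces e B [set x in s] by exists s.
have hfs : hopping_forcing_set e B.
  exists s; split=> //; apply/eqP; rewrite eqEsubset subsetT /= -hU.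
  apply: subset_trans (hopU_sub _ _ _) _; apply/subsetP => w; rewrite !inE.
  by case/orP=> [->//|/existsP [v]]; rewrite inE => hv; apply/orP; right;
    apply/existsP; exists v.
have [k hk km] := ptF_le hU.
rewrite /ptB; case: pselect => [?|//]; case: pselect => [h|n].
  exists (ex_minn h) => //; case: ex_minnP => p _ H; apply: leq_trans km; apply: H.
  by apply/asboolP; exists [set x in s].
by exfalso; apply: n; exists k; apply/asboolP; exists [set x in s].
Qed.

Lemma thH_le_ptB B p : ptB e B = Some p -> thH e <= #|B| + p.
Proof.
move=> hp; rewrite /thH; case: pselect => [h|n].
  by case: ex_minnP => m _; apply; apply/asboolP; exists B, p.
by exfalso; apply: n; exists (#|B| + p); apply/asboolP; exists B, p.
Qed.

Lemma thH_le B s m : chron_list e B s -> hopU e B [set x in s] m = setT ->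
  thH e <= #|B| + m.
Proof.
move=> hs hU; have [p hp pm] := ptB_le hs hU.
by apply: leq_trans (thH_le_ptB hp) _; rewrite leq_add2l.
Qed.

Lemma thH_attained : exists B p, ptB e B = Some p /\ thH e = #|B| + p.
Proof.
rewrite /thH; case: pselect => [h|n].
  by case: ex_minnP => m /asboolP [B [p [hp ->]]] _; exists B, p.
have hs : chron_list e [set: T] [::].
  by apply/forallP => v; apply/forallP => w; rewrite /hop_can_force !inE /= !andbF.
have [p hp _] := ptB_le hs (erefl _ : hopU e [set: T] [set x in [::]] 0 = setT).
by case: n; exists (#|[set: T]| + p); apply/asboolP; exists [set: T], p.
Qed.

Lemma ptB_chron B p : ptB e B = Some p ->
  exists s, chron_list e B s /\ hopU e B [set x in s] p = setT.
Proof.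
rewrite /ptB; case: pselect => // ?; case: pselect => // h [<-].
case: ex_minnP => m /asboolP [F [[s [hs ->]] hF]] _; exists s; split=> //.
by move: hF; rewrite /ptF; case: pselect => // h' [<-]; case: ex_minnP => k /eqP.
Qed.

Lemma chron_ok_uniq blue used s :
  chron_ok e blue used s ->
  [/\ uniq (map fst s), uniq (map snd s), all (fun q => q.2 \notin blue) s &
      all (fun q => q.1 \notin used) s].
Proof.
elim: s blue used => [|[v w] s IH] blue used //=.
move=> /andP [/and4P [_ nu _ nb] /IH [u1 u2 a1 a2]].
have a1' : all (fun q => q.2 \notin blue) s.
  by apply/allP => q /(allP a1); rewrite inE negb_or => /andP [].
have a2' : all (fun q => q.1 \notin used) s.
  by apply/allP => q /(allP a2); rewrite inE negb_or => /andP [].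
rewrite u1 u2 nu nb a1' a2' !andbT; split=> //; apply/mapP => [[q qs qE]].
- by move: (allP a2 q qs); rewrite -qE !inE eqxx.
- by move: (allP a1 q qs); rewrite -qE !inE eqxx.
Qed.

End Throttling.

Section Layout.
Variables a b : nat.

Definition cell (i : 'I_a) (j : nat) : KV a b := (i, inord j).

Lemma cellK (x : KV a b) : cell x.1 x.2 = x.
Proof. by case: x => i j; rewrite /cell inord_val. Qed.

Lemma cell_col i j : j <= b -> (cell i j).2 = j :> nat.
Proof. by move=> h; rewrite /= inordK. Qed.

Record row_intervals (T : Type) (g : KV a b -> T) : Prop := RowIntervals {
  fibre_row : forall x y, g x = g y -> x.1 = y.1;
  fibre_interval : forall i (j k l : 'I_b.+1),
    j <= l <= k -> g (i, j) = g (i, k) -> g (i, l) = g (i, j)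
}.

Definition edges_in_columns (T : Type) (e : rel T) (g : KV a b -> T) : Prop :=
  forall x y, e (g x) (g y) ->
  exists x' y', [/\ g x' = g x, g y' = g y & x'.2 = y'.2].

Definition has_layout (T : Type) (e : rel T) : Prop :=
  exists (g : KV a b -> T) (f : T -> KV a b),
    [/\ cancel f g, row_intervals g & edges_in_columns e g].

End Layout.

Arguments cell {a b}.

Section LayoutSchedule.
Variables (a b : nat) (T : finType) (e : rel T).
Variables (g : KV a b -> T) (f : T -> KV a b).
Hypotheses (fK : cancel f g) (gI : row_intervals g) (gE : edges_in_columns e g).

Lemma fibre_interval_cell i j k l : j <= l <= k -> k <= b ->
  g (cell i j) = g (cell i k) -> g (cell i l) = g (cell i j).
Proof.
move=> /andP [jl lk] kb; have lb := leq_trans lk kb; have jb := leq_trans jl lb.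
by apply: (fibre_interval gI); rewrite !inordK ?jl.
Qed.

Definition row_change i j := g (cell i j) != g (cell i j.+1).

Lemma fibre_no_row_change i j k l : k <= j < l -> l <= b ->
  g (cell i k) = g (cell i l) -> ~~ row_change i j.
Proof.
move=> /andP [kj jl] lb gkl; rewrite negbK.
rewrite (@fibre_interval_cell i k l j) ?kj ?(ltnW jl) //.
by rewrite (@fibre_interval_cell i k l j.+1) // jl (leq_trans kj (leqnSn j)).
Qed.

Lemma fibre_cell (x : KV a b) i j : g x = g (cell i j) -> x = cell i x.2.
Proof. by move=> gx; rewrite -[i](fibre_row gI gx) cellK. Qed.

(* A neighbour of the vertex leaving row [i] after column [j] shares a column
   with some cell of that vertex, which lies in a column [<= j]. *)
Lemma row_change_nbr i j u : j < b -> row_change i j -> e (g (cell i j)) u ->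
  exists y : KV a b, y.2 <= j /\ g y = u.
Proof.
move=> jb ch heu; have := gE (x := cell i j) (y := f u).
rewrite fK => /(_ heu) [x' [y' [gx' <- xy]]]; exists y'; split=> //.
rewrite -xy leqNgt; apply: contraL ch => jx.
apply: (@fibre_no_row_change i j j x'.2); first by rewrite leqnn jx.
- by rewrite -ltnS.
- by rewrite -(fibre_cell gx').
Qed.

Definition blue_cells (h : 'I_a -> nat) :=
  [set t | [exists x : KV a b, (x.2 <= h x.1) && (g x == t)]].

Definition forcers (h : 'I_a -> nat) :=
  [set t | [exists x : KV a b, [&& x.2 < h x.1, row_change x.1 x.2 & g x == t]]].

Lemma forcers_mono h h' : (forall i, h i <= h' i) -> forcers h \subset forcers h'.
Proof.
move=> hh; apply/subsetP => t; rewrite !inE => /existsP [x /and3P [h1 h2 h3]].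
by apply/existsP; exists x; rewrite h2 h3 (leq_trans h1 (hh _)).
Qed.

Lemma blue_cells_step h h' i0 : h i0 < b -> h' i0 = (h i0).+1 ->
  (forall i, i != i0 -> h' i = h i) ->
  blue_cells h' = g (cell i0 (h i0).+1) |: blue_cells h.
Proof.
move=> hb e0 eo; apply/setP => t; rewrite !inE; apply/idP/idP.
  move=> /existsP [x /andP [hx /eqP <-]].
  case: (eqVneq x.1 i0) => [r|nr].
    move: hx; rewrite r e0 leq_eqVlt => /orP [/eqP xe|hx].
      by apply/orP; left; rewrite -xe -r cellK.
    by apply/orP; right; apply/existsP; exists x; rewrite r -ltnS hx eqxx.
  by apply/orP; right; apply/existsP; exists x; rewrite -(eo _ nr) hx eqxx.
move=> /orP [/eqP ->|/existsP [x /andP [hx /eqP <-]]].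
  by apply/existsP; exists (cell i0 (h i0).+1); rewrite cell_col // e0 leqnn eqxx.
apply/existsP; exists x; rewrite eqxx andbT.
case: (eqVneq x.1 i0) => [r|nr]; last by rewrite eo.
by rewrite r e0; rewrite r in hx; apply: leq_trans hx _.
Qed.

Section Column.
Variables (j : nat) (jb : j < b).

Lemma can_force_row h i0 (us : {set T}) : (forall i, j <= h i <= j.+1) ->
  h i0 = j -> row_change i0 j -> us \subset forcers h ->
  hop_can_force e (blue_cells h) us (g (cell i0 j)) (g (cell i0 j.+1)).
Proof.
move=> hr h0 ch hus; have jb' := ltnW jb.
apply/and4P; split.
- by rewrite inE; apply/existsP; exists (cell i0 j); rewrite cell_col // h0 leqnn eqxx.
- apply/negP => /(subsetP hus); rewrite inE => /existsP [x /and3P [xj chx /eqP gx]].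
  rewrite (fibre_row gI gx) /= h0 in xj chx; move: chx; apply/negP.
  apply: (@fibre_no_row_change i0 x.2 x.2 j); first by rewrite leqnn xj.
  + exact: ltnW.
  + by rewrite -(fibre_cell gx).
- apply/forallP => u; apply/implyP => heu.
  have [y [yj <-]] := row_change_nbr jb ch heu.
  rewrite inE; apply/existsP; exists y; rewrite eqxx andbT.
  by apply: leq_trans yj _; case/andP: (hr y.1).
- apply/negP; rewrite inE => /existsP [x /andP [xj /eqP gx]].
  rewrite (fibre_row gI gx) /= h0 in xj; move: ch; apply/negP.
  apply: (@fibre_no_row_change i0 j x.2 j.+1); first by rewrite xj ltnSn.
  + exact: jb.
  + by rewrite -(fibre_cell gx).
Qed.

(* Rows in [rs] are still at column [j], the others have moved to [j.+1]. *)
Lemma chron_column (rest : seq (T * T)) (rs : seq 'I_a) : uniq rs ->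
  (forall h, (forall i, h i = j.+1) -> forall bl us : {set T},
     bl = blue_cells h -> us \subset forcers h -> chron_ok e bl us rest) ->
  forall h, (forall i, i \in rs -> h i = j) -> (forall i, i \notin rs -> h i = j.+1) ->
  forall bl us : {set T}, bl = blue_cells h -> us \subset forcers h ->
  chron_ok e bl us
    ([seq (g (cell i j), g (cell i j.+1)) | i <- rs & row_change i j] ++ rest).
Proof.
elim: rs => [|i0 rs IH] /= urs hrest h hin hout bl us hbl hus.
  by apply: (hrest h) => // i; apply: hout.
move: urs => /andP [ni0 urs].
pose h' i := if i == i0 then j.+1 else h i.
have hr i : j <= h i <= j.+1.
  by case: (boolP (i \in i0 :: rs)) => hi; [rewrite hin | rewrite hout];
    rewrite // leqnn leqnSn.
have h0 : h i0 = j by rewrite hin // mem_head.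
have hin' i : i \in rs -> h' i = j.
  move=> hi; rewrite /h'; case: eqP => [ei|_]; first by rewrite -ei hi in ni0.
  by rewrite hin // inE hi orbT.
have hout' i : i \notin rs -> h' i = j.+1.
  by move=> hi; rewrite /h'; case: eqP => // /eqP ni; rewrite hout // inE negb_or ni.
have blue' : blue_cells h' = g (cell i0 j.+1) |: blue_cells h.
  by rewrite -h0; apply: blue_cells_step; rewrite ?h0 // /h' ?eqxx // => i /negbTE ->.
have mono : forcers h \subset forcers h'.
  by apply: forcers_mono => i; rewrite /h'; case: eqP => // ->; rewrite h0.
case: ifP => ch /=.
  apply/andP; split; first by rewrite hbl; apply: can_force_row.
  apply: (IH urs hrest h' hin' hout'); first by rewrite blue' hbl.
  rewrite subUset (subset_trans hus mono) andbT sub1set inE.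
  apply/existsP; exists (cell i0 j).
  by rewrite (cell_col _ (ltnW jb)) /= /h' eqxx ltnSn ch eqxx.
apply: (IH urs hrest h' hin' hout' bl us _ (subset_trans hus mono)).
rewrite blue' hbl; apply/esym/setUidPr; rewrite sub1set inE; apply/existsP.
by exists (cell i0 j); rewrite (cell_col _ (ltnW jb)) h0 leqnn; move/negbFE: ch => ->.
Qed.

End Column.

Definition column_forces j :=
  [seq (g (cell i j), g (cell i j.+1)) | i <- enum 'I_a & row_change i j].

Definition schedule := flatten [seq column_forces j | j <- iota 0 b].

Lemma chron_columns k j : j + k = b -> forall h, (forall i, h i = j) ->
  forall bl us : {set T}, bl = blue_cells h -> us \subset forcers h ->
  chron_ok e bl us (flatten [seq column_forces j' | j' <- iota j k]).
Proof.
elim: k j => [|k IH] j hjk h hh bl us hbl hus /=.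
  apply/forallP => v; apply/forallP => w; apply/negP => /and4P [_ _ _].
  rewrite hbl inE => /existsP []; exists (f w); rewrite fK eqxx andbT hh.
  by rewrite -(addn0 j) hjk -ltnS ltn_ord.
apply: (@chron_column j _ _ _ (enum_uniq _) _ h _ _ bl us hbl hus).
- by rewrite -hjk; lia.
- move=> h' hh' bl' us' hbl' hus'; apply: (IH j.+1 _ h') => //; lia.
- by move=> i _; apply: hh.
- by move=> i; rewrite mem_enum.
Qed.

Definition first_column := blue_cells (fun _ => 0).

Lemma chron_schedule : chron_list e first_column schedule.
Proof. by apply: (chron_columns (j := 0)) => //; apply: sub0set. Qed.

Lemma card_first_column : #|first_column| = a.
Proof.
have -> : first_column = [set g (cell i 0) | i : 'I_a].
  apply/setP => t; rewrite inE; apply/existsP/imsetP.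
    move=> [x /andP [hx /eqP <-]]; exists x.1 => //.
    by rewrite -{1}(cellK x); move: hx; rewrite leqn0 => /eqP ->.
  by move=> [i _ ->]; exists (cell i 0); rewrite cell_col // eqxx.
by rewrite card_imset ?card_ord // => i i' /(fibre_row gI).
Qed.

Lemma blue_cells_hopU k : k <= b ->
  blue_cells (fun _ => k) \subset hopU e first_column [set x in schedule] k.
Proof.
elim: k => [|k IH] kb /=; first exact: subxx.
have {}IH := IH (ltnW kb).
apply/subsetP => t; rewrite inE => /existsP [x /andP [hx /eqP <-]].
have old : g x \in blue_cells (fun _ => k) ->
    g x \in hopU e first_column [set x in schedule] k.+1.
  by move=> h /=; rewrite inE (subsetP IH _ h).
move: hx; rewrite leq_eqVlt ltnS => /orP [/eqP hx|hx]; last first.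
  by apply: old; rewrite inE; apply/existsP; exists x; rewrite hx eqxx.
have xE : x = cell x.1 k.+1 by rewrite -{1}(cellK x) hx.
case: (boolP (row_change x.1 k)) => ch; last first.
  apply: old; rewrite inE; apply/existsP; exists (cell x.1 k).
  by rewrite (cell_col _ (ltnW kb)) leqnn {2}xE; move/negbNE: ch => ->.
rewrite inE; apply/orP; right; rewrite inE; apply/existsP; exists (g (cell x.1 k)).
apply/and3P; split.
- rewrite inE; apply/flatten_mapP; exists k; first by rewrite mem_iota.
  by rewrite {2}xE; apply/mapP; exists x.1; rewrite // mem_filter ch mem_enum.
- apply: (subsetP IH); rewrite inE; apply/existsP; exists (cell x.1 k).
  by rewrite (cell_col _ (ltnW kb)) leqnn eqxx.
- apply/forallP => u; apply/implyP => heu.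
  have [y [yk <-]] := row_change_nbr kb ch heu.
  by apply: (subsetP IH); rewrite inE; apply/existsP; exists y; rewrite yk eqxx.
Qed.

Lemma layout_thH : thH e <= a + b.
Proof.
rewrite -card_first_column; apply: (thH_le chron_schedule).
apply/eqP; rewrite eqEsubset subsetT /=; apply: subset_trans (blue_cells_hopU (leqnn b)).
apply/subsetP => t _; rewrite inE; apply/existsP; exists (f t); rewrite fK eqxx andbT.
by rewrite -ltnS ltn_ord.
Qed.

End LayoutSchedule.

Section ForcingChains.
Variables (T : finType) (e : rel T) (B : {set T}) (s : seq (T * T)) (p : nat).
Hypotheses (e_sym : symmetric e) (hs : chron_list e B s).
Hypothesis hU : hopU e B [set x in s] p = setT.

Let F := [set x in s].

Lemma hopU_exhaust t : exists k, t \in hopU e B F k.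
Proof. by exists p; rewrite hU inE. Qed.

Definition hop_time t := ex_minn (hopU_exhaust t).

Lemma hop_timeP t k : (t \in hopU e B F k) = (hop_time t <= k).
Proof.
rewrite /hop_time; case: ex_minnP => m hm hmin; apply/idP/idP; first exact: hmin.
by move=> hk; apply: (subsetP (hopU_mono e B F hk)).
Qed.

Lemma hop_time_le t : hop_time t <= p.
Proof. by rewrite -hop_timeP hU inE. Qed.

Lemma hop_time_eq0 t : (hop_time t == 0) = (t \in B).
Proof. by rewrite -leqn0 -hop_timeP. Qed.

Lemma hop_time_forcer t k : hop_time t = k.+1 ->
  exists v, [/\ (v, t) \in s, hop_time v <= k & forall u, e v u -> hop_time u <= k].
Proof.
move=> ht.
have : t \in hopU e B F k.+1 by rewrite hop_timeP ht.
rewrite /= inE hop_timeP ht ltnn /= inE => /existsP [v /and3P [hv hvk /forallP hn]].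
exists v; split; first by rewrite inE in hv.
- by rewrite -hop_timeP.
- by move=> u heu; rewrite -hop_timeP; move/implyP: (hn u); apply.
Qed.

Lemma forced_uniq v w w' : (v, w) \in s -> (v, w') \in s -> w = w'.
Proof.
have [u1 _ _ _] := chron_ok_uniq hs.
by move=> h h'; case: (uniq_map_inj_in u1 h h' erefl).
Qed.

Lemma forcer_uniq v v' w : (v, w) \in s -> (v', w) \in s -> v = v'.
Proof.
have [_ u2 _ _] := chron_ok_uniq hs.
by move=> h h'; case: (uniq_map_inj_in u2 h h' erefl).
Qed.

(* Row [i] of the layout: the forcing chain started at the [i]-th vertex of
   [B], sampled at time [j]. *)
Fixpoint chain (i : 'I_#|B|) (j : nat) : T :=
  match j with
  | 0 => enum_val i
  | j'.+1 => let v := chain i j' in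
      if [pick w | ((v, w) \in s) && (hop_time w == j'.+1)] is Some w then w else v
  end.

Lemma chain_step i j : chain i j.+1 = chain i j \/
  (chain i j, chain i j.+1) \in s /\ hop_time (chain i j.+1) = j.+1.
Proof. by rewrite /=; case: pickP => [w /andP [h1 /eqP h2]|_]; [right|left]. Qed.

Lemma hop_time_chain i j : hop_time (chain i j) <= j.
Proof.
elim: j => [|j IH]; first by rewrite leqn0 hop_time_eq0 enum_valP.
by case: (chain_step i j) => [->|[_ ->]] //; apply: leq_trans IH _.
Qed.

Lemma chain_interval i j l : hop_time (chain i j) <= l <= j -> chain i l = chain i j.
Proof.
elim: j => [|j IH] /andP [h1 h2]; first by move: h2; rewrite leqn0 => /eqP ->.
move: h2; rewrite leq_eqVlt => /orP [/eqP ->//|]; rewrite ltnS => h2.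
case: (chain_step i j) => [e1|[_ e2]].
  by rewrite e1 IH // -e1 h1.
by move: (leq_trans h1 h2); rewrite e2 ltnn.
Qed.

Lemma chain_inj i i' j : chain i j = chain i' j -> i = i'.
Proof.
elim: j => [|j IH]; first exact: enum_val_inj.
case: (chain_step i j) => [e1|[s1 t1]]; case: (chain_step i' j) => [e2|[s2 t2]].
- by rewrite e1 e2; apply: IH.
- by move=> h; move: (hop_time_chain i j); rewrite -e1 h t2 ltnn.
- by move=> h; move: (hop_time_chain i' j); rewrite -e2 -h t1 ltnn.
- by move=> h; apply: IH; apply: (forcer_uniq s1); rewrite h.
Qed.

Lemma chain_row i i' j j' : chain i j = chain i' j' -> i = i'.
Proof.
move=> h; apply: (@chain_inj _ _ (hop_time (chain i j))).
rewrite (@chain_interval i j) ?leqnn ?hop_time_chain // h.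
by rewrite (@chain_interval i' j') ?leqnn ?hop_time_chain.
Qed.

(* A vertex with a neighbour [u] cannot force before [u] is blue. *)
Lemma chain_wait i j u : e (chain i j) u -> forall d, j + d <= hop_time u ->
  chain i (j + d) = chain i j.
Proof.
move=> heu; elim=> [|d IH] hd; first by rewrite addn0.
rewrite addnS; case: (chain_step i (j + d)) => [->|[s1 t1]]; first by apply: IH; lia.
have [v [hv _ hn]] := hop_time_forcer t1.
rewrite IH in s1; last by lia.
by have := hn u; rewrite -(forcer_uniq s1 hv) => /(_ heu); lia.
Qed.

Lemma chain_next i j w : (chain i j, w) \in s -> j < hop_time w ->
  chain i (hop_time w) = w.
Proof.
move=> hv jw.
have stay d : j + d < hop_time w -> chain i (j + d) = chain i j.
  elim: d => [|d IH] hd; first by rewrite addn0.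
  rewrite addnS; case: (chain_step i (j + d)) => [->|[s1 t1]]; first by apply: IH; lia.
  rewrite IH in s1; last by lia.
  by move: t1; rewrite (forced_uniq s1 hv); lia.
set d := (hop_time w - j).-1; have wE : hop_time w = (j + d).+1 by rewrite /d; lia.
rewrite wE /= stay ?wE //.
case: pickP => [w' /andP [hw' _] | /(_ w)]; first exact: forced_uniq hw' hv.
by rewrite hv wE eqxx.
Qed.

Lemma chain_surj t : exists i, chain i (hop_time t) = t.
Proof.
have [n] := ubnP (hop_time t); elim: n t => // n IH t tn.
case ht: (hop_time t) => [|k].
  have tB : t \in B by rewrite -hop_time_eq0 ht.
  by exists (enum_rank_in tB t); rewrite /= enum_rankK_in.
have [v [vt vk _]] := hop_time_forcer ht.
have [i iv] : exists i, chain i (hop_time v) = v by apply: IH; lia.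
by exists i; rewrite -ht (@chain_next i (hop_time v)) ?iv // ht ltnS.
Qed.

Lemma chain_edge_column i j i' j' : e (chain i j) (chain i' j') ->
  hop_time (chain i j) <= hop_time (chain i' j') ->
  chain i (hop_time (chain i' j')) = chain i j.
Proof.
move=> heu le; set k := hop_time (chain i j).
have ik : chain i k = chain i j by rewrite (@chain_interval i j) // leqnn hop_time_chain.
by rewrite -ik -(subnKC le) (@chain_wait _ _ (chain i' j')) ?ik ?subnKC.
Qed.

Lemma forcing_has_layout b : p <= b -> has_layout #|B| b e.
Proof.
move=> pb; pose g (x : KV #|B| b) := chain x.1 x.2.
have tb t : hop_time t < b.+1 by rewrite ltnS (leq_trans (hop_time_le t)).
have ch t : exists i, chain i (hop_time t) == t.
  by have [i it] := chain_surj t; exists i; rewrite it.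
exists g, (fun t => (xchoose (ch t), inord (hop_time t))); split.
- by move=> t; rewrite /g /= inordK //; apply/eqP/(xchooseP (ch t)).
- split=> [x y /chain_row //|i j k l /andP [jl lk] jk].
  rewrite /g /= in jk *; rewrite jk (@chain_interval i k) // lk andbT.
  by rewrite -jk (leq_trans (hop_time_chain _ _)).
move=> x y; wlog le : x y / hop_time (g x) <= hop_time (g y) => [hwlog|] heu.
  case: (leqP (hop_time (g x)) (hop_time (g y))) => [le|/ltnW le]; first exact: hwlog.
  by rewrite e_sym in heu; have [y' [x' [? ? ?]]] := hwlog y x le heu; exists x', y'.
pose c : 'I_b.+1 := inord (hop_time (g y)).
exists (x.1, c), (y.1, c); split=> //; rewrite /g /c /= inordK //.
- exact: chain_edge_column.
- by rewrite (@chain_interval y.1 y.2) // leqnn hop_time_chain.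
Qed.

End ForcingChains.

Lemma thH_has_layout (T : finType) (e : rel T) t : symmetric e -> 0 < #|T| -> thH e <= t ->
  exists a b, [/\ 1 <= a, a + b = t & has_layout a b e].
Proof.
move=> e_sym T0 th_t; have [B [p [hp thE]]] := thH_attained e.
have [s [hs hU]] := ptB_chron hp.
have B0 : 0 < #|B|.
  rewrite lt0n; apply: contraTneq T0 => /cards0_eq B0.
  by rewrite -cardsT -hU B0 hopU_set0 cards0.
exists #|B|, (t - #|B|); split=> //; first by lia.
by apply: (forcing_has_layout e_sym hs hU); lia.
Qed.

Section Obtainable.
Variables a b : nat.

Record grid_quotient (eqv adj : rel (KV a b)) : Prop := GridQuotient {
  eqv_refl : reflexive eqv;
  eqv_sym : symmetric eqv;
  eqv_trans : transitive eqv;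
  eqv_row : forall x y, eqv x y -> x.1 = y.1;
  eqv_interval : forall x y (l : 'I_b.+1), eqv x y -> x.2 <= l <= y.2 -> eqv x (x.1, l);
  adj_column : forall x y, adj x y ->
    exists x' y', [/\ eqv x x', eqv y y' & x'.2 = y'.2]
}.

Definition identify_adj (eqv adj : rel (KV a b)) (x y : KV a b) : rel (KV a b) :=
  fun u v => ~~ merge eqv x y u v &&
    [exists u', exists v', [&& merge eqv x y u u', merge eqv x y v v' & adj u' v']].

Lemma identify_grid_quotient (eqv adj : rel (KV a b)) (x y : KV a b) :
  grid_quotient eqv adj -> x.1 = y.1 -> (y.2 : nat) = (x.2 : nat).+1 ->
  grid_quotient (merge eqv x y) (identify_adj eqv adj x y).
Proof.
move=> [r s t row conv col] hrow hcol.
have mt : transitive (merge eqv x y) := @merge_trans _ _ s t x y.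
split=> //.
- by move=> u; rewrite /merge r.
- exact: merge_sym.
- move=> u v /or3P [h|/andP [h1 h2]|/andP [h1 h2]]; first exact: row.
  + by rewrite (row _ _ h1) hrow (row _ _ h2).
  + by rewrite (row _ _ h1) -hrow (row _ _ h2).
- move=> u v l /or3P [h|/andP [h1 h2]|/andP [h1 h2]] /andP [hul hlv].
  + by rewrite /merge (conv _ _ _ h) ?hul.
  + rewrite /merge; case: (leqP l x.2) => hlx.
      by rewrite (conv u x l h1) ?hul.
    have hy : eqv y (y.1, l) by apply: (conv y v); rewrite 1?s // hcol hlx.
    by rewrite (row _ _ h1) hrow (s (y.1, l) y) hy h1 orbT.
  + rewrite /merge; case: (leqP l x.2) => hlx.
      by rewrite (conv u y l h1) ?hul // hcol ltnW.
    have hx : eqv x (x.1, l) by apply: (conv x v); rewrite 1?s // (ltnW hlx).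
    by rewrite (row _ _ h1) -hrow (s (x.1, l) x) hx h1 !orbT.
- move=> u v /andP [_ /existsP [u' /existsP [v' /and3P [h1 h2 h3]]]].
  have [u'' [v'' [h4 h5 h6]]] := col _ _ h3.
  by exists u'', v''; split; [apply: mt h1 _|apply: mt h2 _|]; rewrite /merge ?h4 ?h5.
Qed.

Lemma obtainable_grid_quotient (eqv adj : rel (KV a b)) :
  obtainable eqv adj -> grid_quotient eqv adj.
Proof.
elim=> {eqv adj}.
- split=> //.
  + by move=> y x z /eqP -> /eqP ->.
  + by move=> x y /eqP ->.
  + move=> x y l /eqP <- /andP [h1 h2].
    have -> : l = x.2 by apply/val_inj/eqP; rewrite eqn_leq h2 h1.
    by case: x {h1 h2}.
  + by move=> x y /andP [/eqP h _]; exists x, y.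
- by move=> eqv adj x y _ Q hrow hcol _; exact: identify_grid_quotient.
- move=> eqv adj x y _ [r s t row conv col] _; split=> //.
  by move=> u v /andP [h _]; exact: col.
Qed.

End Obtainable.

Lemma quotient_has_layout a b (T : finType) (e : rel T) (eqv adj : rel (KV a b)) :
  grid_quotient eqv adj -> iso_to_quotient e eqv adj -> has_layout a b e.
Proof.
move=> [r s tr row conv col] [f [finj [fsurj fadj]]].
pose g v := xchoose (fsurj v).
have eqv_g v : eqv v (f (g v)) := xchooseP (fsurj v).
have g_eqv x y : (g x = g y) <-> eqv x y.
  split=> [gxy|exy]; first by apply: (tr (f (g x))); rewrite // s gxy.
  apply: finj; apply: (tr x); first by rewrite s.
  exact: (tr y _ _ exy).
have fK : cancel f g by move=> t; apply/esym/finj/eqv_g.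
have g_eqv_f x t : eqv x (f t) -> g x = t by move=> h; rewrite -[t]fK; apply/g_eqv.
exists g, f; split=> //.
- split=> [x y /g_eqv/row //|i j k l hl /g_eqv h].
  by apply/esym/g_eqv; exact: conv h hl.
- move=> x y; rewrite fadj => /col [x' [y' [h1 h2 h3]]].
  by exists x', y'; split=> //; apply: g_eqv_f; rewrite s.
Qed.

Section Realization.
Variables a b : nat.

Definition column_adj (T : eqType) (g : KV a b -> T) : rel T :=
  fun p q => [exists x, exists y, [&& g x == p, g y == q, x.2 == y.2 & x.1 != y.1]].

Definition represents (T : eqType) (g : KV a b -> T) (r : rel T)
    (eqv adj : rel (KV a b)) : Prop :=
  (forall x y, eqv x y = (g x == g y)) /\ (forall x y, adj x y = r (g x) (g y)).

Definition merged_cells (T : eqType) (g : KV a b -> T) :=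
  [set x : KV a b | (x.2 < b) && (g x == g (cell x.1 x.2.+1))].

Lemma row_intervals_inj (T : eqType) (g : KV a b -> T) :
  row_intervals g -> merged_cells g = set0 -> injective g.
Proof.
move=> gI g0.
suff W x y : g x = g y -> x.2 <= y.2 -> x = y.
  by move=> x y gxy; case: (leqP x.2 y.2) => [|/ltnW] h; [|apply/esym]; apply: W.
case: x => i j; case: y => i' k gxy jk; have /= ii' := fibre_row gI gxy; subst i'.
case: (ltnP j k) => [{}jk|kj]; last by congr pair; apply/val_inj/anti_leq; rewrite jk.
have jb : j < b by apply: leq_trans jk _; rewrite -ltnS.
have : (i, j) \in merged_cells g.
  by rewrite inE /= jb (@fibre_interval _ _ _ _ gI i j k (inord j.+1)) ?inordK ?eqxx
    ?leqnSn.
by rewrite g0 inE.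
Qed.

Lemma obtainable_of_injective (T : eqType) (g : KV a b -> T) :
  injective g -> exists eqv adj, obtainable eqv adj /\ represents g (column_adj g) eqv adj.
Proof.
move=> g_inj; exists (fun x y => x == y), (fun x y => (x.2 == y.2) && (x.1 != y.1)).
split; first exact: obt_start.
split=> x y; first by rewrite (inj_eq g_inj).
apply/idP/existsP => [h|[x' /existsP [y' /and4P [/eqP/g_inj <- /eqP/g_inj <- -> ->]]]] //.
by exists x; apply/existsP; exists y; rewrite !eqxx.
Qed.

Section SplitRow.
Variables (T : eqType) (g : KV a b -> T) (i : 'I_a) (j : 'I_b.+1).
Hypotheses (gI : row_intervals g) (jb : j < b) (gj : g (i, j) = g (cell i j.+1)).

(* [g] with the fibre of [(i, j)] cut between columns [j] and [j.+1]. *)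
Definition split_row (x : KV a b) : T * bool := (g x, (x.1 == i) && (j < x.2)).

Lemma split_row_intervals : row_intervals split_row.
Proof.
split=> [x y [] /(fibre_row gI) //|i' j1 k1 l /andP [h1 h2] [] e1 e2].
rewrite /split_row (fibre_interval gI _ e1) ?h1 ?h2 //; congr pair; move: e2 => /=.
case: (i' == i) => //=; case: (ltnP j j1) => h3 /=; first by move=> _; apply: leq_trans h1.
by move/esym/negbT; rewrite -leqNgt => h4; apply/negbTE; rewrite -leqNgt (leq_trans h2 h4).
Qed.

Lemma card_merged_split_row : #|merged_cells split_row| < #|merged_cells g|.
Proof.
apply: proper_card; apply/properP; split.
  by apply/subsetP => x; rewrite !inE => /andP [-> /eqP [] -> _]; rewrite eqxx.
exists (i, j); first by rewrite inE /= jb gj eqxx.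
by rewrite inE /= jb /split_row xpair_eqE /= !eqxx ltnn inordK // ltnSn /= andbF.
Qed.

Lemma split_row_cut u v : g u = g v -> split_row u != split_row v -> g u = g (i, j).
Proof.
case: u v => [iu ju] [iv jv] guv; have /= iuv := fibre_row gI guv; subst iv.
rewrite /split_row xpair_eqE guv eqxx /=.
case: (eqVneq iu i) => [eiu|] //=; subst iu.
case: (ltnP j ju) => hu; case: (ltnP j jv) => hv //= _.
- by apply/esym; apply: (fibre_interval gI _ (esym guv)); rewrite hv ltnW.
- by rewrite -guv; apply/esym; apply: (fibre_interval gI _ guv); rewrite hu ltnW.
Qed.

Lemma merge_split_row u v :
  merge (fun x y => split_row x == split_row y) (i, j) (cell i j.+1) u v = (g u == g v).
Proof.
rewrite mergeE; last 2 first.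
- by move=> ? ?; rewrite eq_sym.
- by move=> ? ? ? /eqP -> /eqP ->.
have cut := @split_row_cut u v.
have E (p c : bool) : p && (c == false) || p && (c == true) = p by case: p; case: c.
rewrite /split_row !xpair_eqE /= -gj !eqxx inordK // ltnn ltnSn /= !E.
case: (eqVneq (g u) (g v)) => [guv|nguv] /=; last first.
  by apply: contraNF nguv => /andP [/eqP -> /eqP ->].
case: (boolP (split_row u == split_row v)) => [/eqP [_ ->]|/(cut guv) gu].
  by rewrite eqxx.
by rewrite -guv gu eqxx orbT.
Qed.

Lemma identify_split_row eqv0 adj0 : obtainable eqv0 adj0 ->
  represents split_row (column_adj split_row) eqv0 adj0 ->
  exists eqv adj, obtainable eqv adj /\ represents g (column_adj g) eqv adj.
Proof.
move=> ob [E0 A0]; pose y0 : KV a b := cell i j.+1.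
have ne : ~~ eqv0 (i, j) y0.
  by rewrite E0 /split_row xpair_eqE /= eqxx inordK // ltnn ltnSn /= andbF.
have mE u v : merge eqv0 (i, j) y0 u v = (g u == g v).
  by rewrite -merge_split_row /merge !E0.
exists (merge eqv0 (i, j) y0), (identify_adj eqv0 adj0 (i, j) y0); split.
  exact: (@obt_identify a b eqv0 adj0 (i, j) y0 ob erefl (cell_col i jb) ne).
split=> // u v; rewrite /identify_adj mE; apply/andP/existsP.
  case=> _ /existsP [u' /existsP [v' /and3P [gu' gv']]]; rewrite !mE A0 in gu' gv' *.
  case/existsP=> x' /existsP [y' /and4P [/eqP [gx' _] /eqP [gy' _] xy' xy1]].
  exists x'; apply/existsP; exists y'.
  by rewrite gx' gy' -(eqP gu') -(eqP gv') !eqxx xy' xy1.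
case=> x' /existsP [y' /and4P [/eqP gx' /eqP gy' xy' xy1]]; split.
  by apply: contra xy1 => /eqP guv; rewrite (fibre_row gI (x := x') (y := y')) ?gx' ?gy'.
apply/existsP; exists x'; apply/existsP; exists y'; rewrite !mE A0 gx' gy' !eqxx /=.
by apply/existsP; exists x'; apply/existsP; exists y'; rewrite !eqxx xy' xy1.
Qed.

End SplitRow.

End Realization.

Section RealizeLayout.
Variables a b : nat.

Lemma obtainable_fibres (T : eqType) (g : KV a b -> T) : row_intervals g ->
  exists eqv adj, obtainable eqv adj /\ represents g (column_adj g) eqv adj.
Proof.
have [n] := ubnP #|merged_cells g|; elim: n T g => // n IH T g gn gI.
case: (set_0Vmem (merged_cells g)) => [g0|[[i j]]].
  exact/obtainable_of_injective/row_intervals_inj.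
rewrite inE /= => /andP [jb /eqP gj].
have [eqv0 [adj0 [ob R0]]] := IH _ _ (leq_trans (card_merged_split_row jb gj) gn)
  (split_row_intervals i j gI).
exact: identify_split_row ob R0.
Qed.

Lemma obtainable_delete (T : finType) (e r : rel T) (g : KV a b -> T) (f : T -> KV a b)
    (eqv adj : rel (KV a b)) :
  symmetric e -> cancel f g -> subrel e r -> obtainable eqv adj ->
  represents g r eqv adj ->
  exists eqv adj, obtainable eqv adj /\ represents g e eqv adj.
Proof.
move=> e_sym fK.
have [n] := ubnP #|[set pq : T * T | r pq.1 pq.2 && ~~ e pq.1 pq.2]|.
elim: n r adj => // n IH r adj rn er ob [E A].
case: (set_0Vmem [set pq : T * T | r pq.1 pq.2 && ~~ e pq.1 pq.2]) => [r0|[[p q]]].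
  exists eqv, adj; split=> //; split=> // x y; rewrite A.
  have := in_set0 (g x, g y); rewrite -r0 inE /=.
  by case: (boolP (e (g x) (g y))) => [/er -> //|_]; rewrite andbT => ->.
rewrite inE /= => /andP [rpq epq].
have pq_adj : adj (f p) (f q) by rewrite A !fK.
pose r' u v := r u v && ~~ ((u == p) && (v == q) || (u == q) && (v == p)).
apply: (IH r' _ _ _ (obt_delete ob pq_adj)).
- rewrite -ltnS; apply: leq_trans rn; apply: proper_card; apply/properP; split.
    by apply/subsetP => [[u v]]; rewrite !inE /r' => /andP [/andP [-> _] ->].
  by exists (p, q); rewrite !inE /r' /= ?rpq ?epq // !eqxx andbF.
- move=> u v euv; rewrite /r' er //=.
  by apply/negP => /orP [] /andP [/eqP up /eqP vq]; move: epq;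
    rewrite -up -vq ?euv // e_sym euv.
- by split=> // u v /=; rewrite /r' A !E !fK.
Qed.

Lemma layout_obtainable (T : finType) (e : rel T) :
  symmetric e -> irreflexive e -> has_layout a b e ->
  exists eqv adj : rel (KV a b), obtainable eqv adj /\ iso_to_quotient e eqv adj.
Proof.
move=> e_sym e_irr [g [f [fK gI gE]]].
have [eqv0 [adj0 [ob0 R0]]] := obtainable_fibres gI.
have e_col : subrel e (column_adj g).
  move=> p q epq; have := gE (f p) (f q); rewrite !fK => /(_ epq) [x [y [gx gy xy]]].
  apply/existsP; exists x; apply/existsP; exists y; rewrite gx gy xy !eqxx /=.
  apply: contraTneq epq => x1y1.
  have x_y : x = y by apply: injective_projections => //; apply: val_inj.
  by rewrite -gx -gy x_y e_irr.
have [eqv [adj [ob [E A]]]] := obtainable_delete e_sym fK e_col ob0 R0.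
exists eqv, adj; split=> //; exists f; split; first by move=> t t'; rewrite E !fK => /eqP.
split=> [v|t t']; last by rewrite A !fK.
by exists (g v); rewrite E fK.
Qed.

End RealizeLayout.

Theorem theorem3p14 (T : finType) (e : rel T)
  (e_sym : symmetric e) (e_irr : irreflexive e) (T_nonempty : 0 < #|T|)
  (t : nat) (t_pos : 0 < t) :
  thH e <= t <->
  exists a b : nat, 1 <= a /\ a + b = t /\
    exists eqv adj : rel (KV a b),
      obtainable eqv adj /\ iso_to_quotient e eqv adj.
Proof.
split=> [th_t | [a [b [_ [<- [eqv [adj [ob iso]]]]]]]].
  have [a [b [a1 abt lay]]] := thH_has_layout e_sym T_nonempty th_t.
  by exists a, b; do 2!split=> //; exact: layout_obtainable.
have [g [f [fK gI gE]]] := quotient_has_layout (obtainable_grid_quotient ob) iso.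
exact: layout_thH fK gI gE.
Qed.
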